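(* Let $c_{\min}\le c_{\max}$ and $d_{\min}\le d_{\max}$ be integers and let $T=\{c_{\min},\dots,c_{\max}\}\times\{d_{\min},\dots,d_{\max}\}$. Let $a:T\to[0,1]$, $(c,d)\mapsto a_{c,d}$, and $p:T\to\mathbb{R}$, $(c,d)\mapsto p_{c,d}$. For $(c,d),(c',d')\in T$ write $(c,d)\to(c',d')$ for the inequality $$p_{c,d}-c\,a_{c,d}\;\ge\;p_{c',d'}-c\,a_{c',d'}.$$ Suppose that for every $(c,d)\in T$: (1) $(c,d)\to(c',d)$ holds for every $c'<c$; (2) $(c,d)\to(c',d)$ holds for every $c'>c$; (3) $(c,d)\to(c,d')$ holds for every $d'<d$ (all with the reported type in $T$). Then for every $(c,d)\in T$ and every $(c',d')\in T$ with $d'<d$ and $c'\neq c$ (i.e. both the case $c'<c,\ d'<d$ and the case $c'>c,\ d'<d$), the inequality $(c,d)\to(c',d')$ holds.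
   Context: Types $(c,d)$ consist of a forwarding cost $c$ and a predicted path duration $d$. $a_{c,d}$ is the (expected, interim) probability that a bidder reporting type $(c,d)$ wins, and $p_{c,d}$ its expected payment; a bidder with true type $(c,d)$ that wins with probability $a$ incurs expected cost $c\,a$. The inequality $(c,d)\to(c',d')$ is the incentive-compatibility constraint saying that a bidder of true type $(c,d)$ does not gain by reporting $(c',d')$. *)

From Stdlib Require Import Reals ZArith.
Open Scope R_scope.

Definition inT (cmin cmax dmin dmax : Z) (c d : Z) : Prop :=
  (cmin <= c <= cmax)%Z /\ (dmin <= d <= dmax)%Z.

Definition ic (a p : Z -> Z -> R) (c d c' d' : Z) : Prop :=
  p c d - IZR c * a c d >= p c' d' - IZR c * a c' d'.

From Stdlib Require Import Reals ZArith Lia Lra.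
Open Scope R_scope.

(* A bidder of true cost [c] ranks all reports by the same utility
   [p - c a], so its constraints compose: deviating to (c', d') is no better
   than first lowering the duration to (c, d') and then changing the cost. *)

Lemma ic_trans (a p : Z -> Z -> R) (c d d1 c2 d2 : Z) :
  ic a p c d c d1 -> ic a p c d1 c2 d2 -> ic a p c d c2 d2.
Proof. unfold ic; lra. Qed.

Lemma inT_swap (cmin cmax dmin dmax c d c' d' : Z) :
  inT cmin cmax dmin dmax c d -> inT cmin cmax dmin dmax c' d' ->
  inT cmin cmax dmin dmax c d'.
Proof. unfold inT; lia. Qed.

Theorem lemma1 (cmin cmax dmin dmax : Z) (a p : Z -> Z -> R)
  (Hc : (cmin <= cmax)%Z) (Hd : (dmin <= dmax)%Z)
  (Ha : forall c d, inT cmin cmax dmin dmax c d -> 0 <= a c d <= 1)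
  (H1 : forall c d c', inT cmin cmax dmin dmax c d ->
          inT cmin cmax dmin dmax c' d -> (c' < c)%Z -> ic a p c d c' d)
  (H2 : forall c d c', inT cmin cmax dmin dmax c d ->
          inT cmin cmax dmin dmax c' d -> (c < c')%Z -> ic a p c d c' d)
  (H3 : forall c d d', inT cmin cmax dmin dmax c d ->
          inT cmin cmax dmin dmax c d' -> (d' < d)%Z -> ic a p c d c d') :
  forall c d c' d', inT cmin cmax dmin dmax c d ->
    inT cmin cmax dmin dmax c' d' -> (d' < d)%Z -> c' <> c ->
    ic a p c d c' d'.
Proof.
  intros c d c' d' HT HT' Hdd Hne.
  pose proof (inT_swap _ _ _ _ _ _ _ _ HT HT') as HTd'.
  apply ic_trans with d'.
  - exact (H3 c d d' HT HTd' Hdd).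
  - destruct (Z.lt_total c' c) as [Hlt | [Heq | Hgt]].
    + exact (H1 c d' c' HTd' HT' Hlt).
    + contradiction.
    + exact (H2 c d' c' HTd' HT' Hgt).
Qed.
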